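(* Let $F$ be a rooted forest-tuple and $m\in\mathbb{N}$. If $a(F)<m/3$ and $m\ge e(F)$, then $F$ is $m$-suitable.
   Context: A rooted forest is a forest each of whose components contains exactly one designated root. A rooted forest-tuple is a tuple $F=(F_1,\ldots,F_\ell)$ of pairwise vertex-disjoint rooted forests with $e(F_i)>0$ for some $i$; $e(F)=\sum_i e(F_i)$. Define $a(F)=\max_i e(F_i)$, $k(F)=|\{i: e(F_i)=a(F)\}|$, $t(F)=|\{i: e(F_i)>0\}|$. $F$ is suitable if $3a(F)+k(F)-e(F)\le 2$, or if $a(F)=1$ and $t(F)\ge 4$. A rooted forest-tuple $F=(F_1,\dots,F_\ell)$ is a valid subforest of a rooted forest-tuple $G=(G_1,\dots,G_{\ell''})$ if $\ell\le\ell''$, $F_i\subseteq G_i$ for every $i\in[\ell]$, and every root of $F_i$ is a root of $G_i$. $F$ is $m$-suitable if it is a valid subforest of some suitable rooted forest-tuple $G$ with $e(G)=m$. *)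

(* Vertices are natural numbers (an unbounded supply,
   so that a forest-tuple G extending F may use fresh vertices). *)
From mathcomp Require Import all_boot.
Set Implicit Arguments. Unset Strict Implicit. Unset Printing Implicit Defensive.

(* A rooted forest: vertex list, edge list (each unordered edge {u,v} stored once
   as the pair (u,v) with u < v), and list of designated roots. *)
Record rforest := RForest { rf_V : seq nat; rf_E : seq (nat * nat); rf_R : seq nat }.

Definition adj (F : rforest) : rel nat :=
  fun u v => ((u, v) \in rf_E F) || ((v, u) \in rf_E F).

Definition connected_in (F : rforest) (u v : nat) : Prop :=
  exists p : seq nat, path (adj F) u p /\ last u p = v.

Definition nedges (F : rforest) : nat := size (rf_E F).

Definition is_rforest (F : rforest) : Prop :=
  uniq (rf_E F) /\ [/\
      (forall u v, (u, v) \in rf_E F -> [/\ u \in rf_V F, v \in rf_V F & u < v]),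
      (forall c : seq nat, uniq c -> 3 <= size c -> ~~ cycle (adj F) c),
      {subset rf_R F <= rf_V F},
      (forall v, v \in rf_V F -> exists2 r, r \in rf_R F & connected_in F v r) &
      (forall r1 r2, r1 \in rf_R F -> r2 \in rf_R F -> connected_in F r1 r2 -> r1 = r2)].

Definition is_rftuple (F : seq rforest) : Prop :=
  [/\ (forall i, i < size F -> is_rforest (nth (RForest [::] [::] [::]) F i)),
      (forall i j x, i < size F -> j < size F -> i != j ->
         x \in rf_V (nth (RForest [::] [::] [::]) F i) ->
         x \notin rf_V (nth (RForest [::] [::] [::]) F j)) &
      has (fun G => 0 < nedges G) F].

Definition tup_e (F : seq rforest) : nat := sumn (map nedges F).
Definition tup_a (F : seq rforest) : nat := \max_(G <- F) nedges G.
Definition tup_k (F : seq rforest) : nat := count (fun G => nedges G == tup_a F) F.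
Definition tup_t (F : seq rforest) : nat := count (fun G => 0 < nedges G) F.

(* suitable: 3a + k - e <= 2 (over the integers), or (a = 1 and t >= 4) *)
Definition suitable (F : seq rforest) : Prop :=
  3 * tup_a F + tup_k F <= tup_e F + 2 \/ (tup_a F = 1 /\ 4 <= tup_t F).

Definition subforest (F G : rforest) : Prop :=
  {subset rf_V F <= rf_V G} /\ {subset rf_E F <= rf_E G}.

Definition valid_subforest (F G : seq rforest) : Prop :=
  size F <= size G /\
  forall i, i < size F ->
    let Fi := nth (RForest [::] [::] [::]) F i in
    let Gi := nth (RForest [::] [::] [::]) G i in
    subforest Fi Gi /\ {subset rf_R Fi <= rf_R Gi}.

Definition m_suitable (m : nat) (F : seq rforest) : Prop :=
  exists G : seq rforest,
    [/\ is_rftuple G, suitable G, tup_e G = m & valid_subforest F G].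

(* Pad F with m - e(F) single-edge forests on fresh vertices.  The padding keeps
   a(F) >= 1, brings the number of edges to m and F is a valid subforest of the
   result, so it suffices that every forest-tuple with 3a < e is suitable.  If
   a = 1, every part has at most one edge, hence t = e > 3.  If a >= 2, then
   k a <= e; for k <= 3 the bound 3a + k <= e + 2 is immediate, and for k >= 4
   it follows from (k - 3)(a - 1) >= 1. *)
From mathcomp Require Import all_boot.
From mathcomp Require Import zify.

Local Notation rf0 := (RForest [::] [::] [::]).

Lemma sumn_gt0 (s : seq nat) : (0 < sumn s) = has (fun n => 0 < n) s.
Proof. by elim: s => //= n s IH; rewrite addn_gt0 IH. Qed.

Lemma count_mem_mul_le_sumn (s : seq nat) (a : nat) : count_mem a s * a <= sumn s.
Proof. by elim: s => //= n s IH; case: eqP => [->|_] /=; lia. Qed.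

Lemma sumn_eq_count_gt0 (s : seq nat) :
  all (fun n => n <= 1) s -> sumn s = count (fun n => 0 < n) s.
Proof. by elim: s => //= n s IH /andP [n_le1 /IH ->]; case: n n_le1 => [|[]]. Qed.

Lemma tup_aE (F : seq rforest) : tup_a F = \max_(n <- map nedges F) n.
Proof. by rewrite /tup_a big_map. Qed.

Lemma tup_e_cat (F G : seq rforest) : tup_e (F ++ G) = tup_e F + tup_e G.
Proof. by rewrite /tup_e map_cat sumn_cat. Qed.

Lemma tup_a_cat (F G : seq rforest) : tup_a (F ++ G) = maxn (tup_a F) (tup_a G).
Proof. by rewrite /tup_a big_cat. Qed.

Lemma nedges_le_tup_a (F : seq rforest) : all (fun n => n <= tup_a F) (map nedges F).
Proof. by apply/allP => n n_in; rewrite tup_aE; apply: leq_bigmax_seq. Qed.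

Lemma tup_a_gt0 (F : seq rforest) : 0 < tup_e F -> 0 < tup_a F.
Proof.
rewrite /tup_e sumn_gt0 => /hasP [n n_in n_gt0].
by apply: leq_trans n_gt0 _; rewrite tup_aE; apply: leq_bigmax_seq.
Qed.

Lemma tup_k_mul_a_le_e (F : seq rforest) : tup_k F * tup_a F <= tup_e F.
Proof.
by have := count_mem_mul_le_sumn (map nedges F) (tup_a F); rewrite count_map.
Qed.

Lemma tup_e_eq_t (F : seq rforest) : tup_a F <= 1 -> tup_e F = tup_t F.
Proof.
move=> a_le1; rewrite /tup_e /tup_t -count_map sumn_eq_count_gt0 //.
by apply: sub_all (nedges_le_tup_a F) => n /leq_trans; apply.
Qed.

Lemma suitable_of_3a_lt_e (F : seq rforest) : 3 * tup_a F < tup_e F -> suitable F.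
Proof.
move=> a_lt_e; have a_gt0 : 0 < tup_a F by apply: tup_a_gt0; lia.
have ka_le_e := tup_k_mul_a_le_e F.
case: (leqP (tup_a F) 1) => [a_le1|a_gt1]; [right|left].
- by have := tup_e_eq_t F a_le1; lia.
- case: (leqP (tup_k F) 3) => [|k_gt3]; first lia.
  have : 1 * 1 <= (tup_k F - 3) * (tup_a F - 1) by apply: leq_mul; lia.
  nia.
Qed.

Lemma is_rftuple_cat (F P : seq rforest) :
  is_rftuple F ->
  (forall i, i < size P -> is_rforest (nth rf0 P i)) ->
  (forall i j x, i != j -> x \in rf_V (nth rf0 P i) -> x \notin rf_V (nth rf0 P j)) ->
  (forall i j x, x \in rf_V (nth rf0 F i) -> x \notin rf_V (nth rf0 P j)) ->
  is_rftuple (F ++ P).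
Proof.
move=> [F_forests F_disj F_edge] P_forests P_disj FP_disj; split; last first.
  by rewrite has_cat F_edge.
- move=> i j x; rewrite size_cat !nth_cat => i_lt j_lt i_neq_j.
  case: (ltnP i (size F)) => i_F; case: (ltnP j (size F)) => j_F.
  + exact: F_disj.
  + exact: FP_disj.
  + by move=> x_P; apply: contraL x_P; apply: FP_disj.
  + by apply: P_disj; apply: contra i_neq_j => /eqP ij; apply/eqP; lia.
- move=> i; rewrite size_cat nth_cat; case: (ltnP i (size F)) => [i_F _|i_F i_lt].
  + exact: F_forests.
  + by apply: P_forests; lia.
Qed.

Lemma valid_subforest_catr (F P : seq rforest) : valid_subforest F (F ++ P).
Proof.
split=> [|i i_lt /=]; first by rewrite size_cat leq_addr.
by rewrite nth_cat i_lt; split; first split.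
Qed.

Definition vertex_sup (F : seq rforest) : nat := \max_(G <- F) \max_(v <- rf_V G) v.+1.

Lemma vertex_lt_sup (F : seq rforest) i x : x \in rf_V (nth rf0 F i) -> x < vertex_sup F.
Proof.
elim: F i => [|G F IH] [|i] //=; rewrite /vertex_sup big_cons -/(vertex_sup F).
- by move=> x_G; apply: leq_trans (leq_maxl _ _); apply: leq_bigmax_seq.
- by move/IH => x_lt; apply: leq_trans x_lt (leq_maxr _ _).
Qed.

Definition edge_rforest (u : nat) : rforest :=
  RForest [:: u; u.+1] [:: (u, u.+1)] [:: u].

Lemma edge_rforest_is_rforest (u : nat) : is_rforest (edge_rforest u).
Proof.
split=> //; split.
- by move=> x y; rewrite inE => /eqP [-> ->]; rewrite !inE !eqxx orbT ltnSn.
- move=> c c_uniq c_size; apply/negP => c_cycle.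
  have c_sub : {subset c <= [:: u; u.+1]}.
    move=> x x_c; have := next_cycle c_cycle x_c.
    by rewrite /adj !inE => /orP [] /eqP [] => [-> _|_ ->]; rewrite eqxx ?orbT.
  by have := uniq_leq_size c_uniq c_sub; rewrite /=; lia.
- by move=> x; rewrite !inE => /eqP ->; rewrite eqxx.
- move=> v; rewrite !inE => /orP [] /eqP ->; exists u; rewrite ?inE //.
  + by exists [::].
  + by exists [:: u]; rewrite /= /adj !inE eqxx orbT.
- by move=> r1 r2; rewrite !inE => /eqP -> /eqP ->.
Qed.

Definition edge_rforests (N d : nat) : seq rforest :=
  mkseq (fun j => edge_rforest (N + j.*2)) d.

Lemma nth_edge_rforests (N d j : nat) :
  j < d -> nth rf0 (edge_rforests N d) j = edge_rforest (N + j.*2).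
Proof. exact: nth_mkseq. Qed.

Lemma map_nedges_edge_rforests (N d : nat) : map nedges (edge_rforests N d) = nseq d 1.
Proof.
rewrite -map_comp (@eq_map _ _ _ (fun=> 1)) // -[in RHS](size_iota 0 d).
by elim: (iota 0 d) => //= _ s ->.
Qed.

Lemma tup_e_edge_rforests (N d : nat) : tup_e (edge_rforests N d) = d.
Proof. by rewrite /tup_e map_nedges_edge_rforests sumn_nseq mul1n. Qed.

Lemma tup_a_edge_rforests_le1 (N d : nat) : tup_a (edge_rforests N d) <= 1.
Proof.
rewrite tup_aE map_nedges_edge_rforests.
by apply/bigmax_leqP_seq => n; rewrite mem_nseq => /andP [_ /eqP ->].
Qed.

Lemma mem_rf_V_edge_rforests (N d j x : nat) :
  x \in rf_V (nth rf0 (edge_rforests N d) j) -> N + j.*2 <= x <= (N + j.*2).+1.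
Proof.
case: (ltnP j d) => [j_lt|j_ge]; last by rewrite nth_default ?size_mkseq.
by rewrite nth_edge_rforests // !inE => /orP [] /eqP ->; rewrite leqnn leqnSn ?leqW.
Qed.

Lemma is_rftuple_cat_edge_rforests (F : seq rforest) (d : nat) :
  is_rftuple F -> is_rftuple (F ++ edge_rforests (vertex_sup F) d).
Proof.
move=> F_tuple; apply: is_rftuple_cat => //.
- move=> i; rewrite size_mkseq => i_lt.
  by rewrite nth_edge_rforests //; apply: edge_rforest_is_rforest.
- move=> i j x i_neq_j /mem_rf_V_edge_rforests x_i.
  by apply/negP => /mem_rf_V_edge_rforests x_j; move: i_neq_j; lia.
- move=> i j x /vertex_lt_sup x_F.
  by apply/negP => /mem_rf_V_edge_rforests; lia.
Qed.

Theorem lemma3p9 (F : seq rforest) (m : nat) :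
  is_rftuple F -> 3 * tup_a F < m -> tup_e F <= m -> m_suitable m F.
Proof.
move=> F_tuple a_lt_m e_le_m.
have a_gt0 : 0 < tup_a F.
  by apply: tup_a_gt0; rewrite /tup_e sumn_gt0 has_map; case: F_tuple.
set G := F ++ edge_rforests (vertex_sup F) (m - tup_e F).
have e_G : tup_e G = m by rewrite tup_e_cat tup_e_edge_rforests; lia.
have a_G : tup_a G = tup_a F.
  by rewrite tup_a_cat; have := tup_a_edge_rforests_le1 (vertex_sup F) (m - tup_e F); lia.
exists G; split=> //.
- exact: is_rftuple_cat_edge_rforests.
- by apply: suitable_of_3a_lt_e; rewrite a_G e_G.
- exact: valid_subforest_catr.
Qed.
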